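(* Let $L=(\widehat{\mathbb L}(V),d)$ be a connected minimal cdgl with $V$ bounded above, and fix a finite filtration of $V$ by graded subspaces $V=V^0\supset V^1\supset\cdots\supset V^{q-1}\supset V^q=0$. Let $\{F^t\}_{t\ge1}$ be the associated filtration of $\widehat{\mathbb L}(V)$ and, for $n\ge1$, let $\mathcal F^n=\{\theta\in\operatorname{Der}L:\ \theta(F^r)\subset F^{n+r}\text{ for all } r\ge 1\}$. Then $\mathcal F^1$ is a complete differential graded Lie algebra with respect to the filtration $\{\mathcal F^n\}_{n\ge1}$.
   Context: All vector spaces are rational and $\mathbb Z$-graded. $\widehat{\mathbb L}(V)=\varprojlim_n \mathbb L(V)/\mathbb L(V)^n$ is the completion of the free graded Lie algebra on $V$ with respect to its lower central series; $\widehat{\mathbb L}^n(V)$ denotes the (completed) subspace of brackets of length $n$ and $\widehat{\mathbb L}^{\ge n}(V)$ that of brackets of length $\ge n$. ''Connected'' means concentrated in nonnegative degrees; ''minimal'' means $d$ is decomposable ($d(V)\subset\widehat{\mathbb L}^{\ge2}(V)$); $V$ bounded above means $V_{>m}=0$ for some $m$. $\operatorname{Der}L$ is the dgl of derivations of $L$ with the commutator bracket and differential $D=[d,-]$. The filtration $F^t$: for $n\ge1$, $p\ge0$, let $\widehat{\mathbb L}^{n,p}(V)$ be the span of the brackets $[v_1,[v_2,[\dots,[v_{n-1},v_n]\dots]]]\in\widehat{\mathbb L}^n(V)$ with $v_i\in V^{\alpha_i}$ and $\sum_i\alpha_i=p$, and set $F^{n,p}=\widehat{\mathbb L}^{n,p}(V)\oplus\widehat{\mathbb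 L}^{\ge n+1}(V)$. For $n\ge1$ and $0\le p\le nq-1$ put $F^t=F^{n,p}$ with $t=\frac{(n-1)nq}{2}+p+1$, so $\widehat{\mathbb L}(V)=F^1\supset F^2\supset\cdots$. A dgl $M$ filtered by a decreasing sequence of differential ideals $M=\mathcal F^1\supset\mathcal F^2\supset\cdots$ with $[\mathcal F^p,\mathcal F^q]\subset\mathcal F^{p+q}$ is complete if $M\to\varprojlim_n M/\mathcal F^n$ is an isomorphism. *)

(* Model of the completed free graded Lie algebra \hat L(V)
   over Q, V a graded Q-vector space given by a homogeneous basis B with
   degree map deg : B -> int.  \hat L(V) is realised inside the completed
   tensor algebra (formal noncommutative power series), i.e. functions
   seq B -> rat (coefficient of each word). *)
From mathcomp Require Import all_boot all_order all_algebra.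
Set Implicit Arguments. Unset Strict Implicit. Unset Printing Implicit Defensive.
Import Order.TTheory GRing.Theory Num.Theory.
Local Open Scope ring_scope.

Section FreeLie.
Variable B : choiceType.
Variable deg : B -> int.

Definition T := seq B -> rat.
Definition vec := B -> rat.
Definition isV (v : vec) : Prop := exists s : seq B, forall b, b \notin s -> v b = 0.

Definition zeroT : T := fun _ => 0.
Definition zeroV : vec := fun _ => 0.

Definition wdeg (w : seq B) : int := \sum_(b <- w) deg b.
Definition sgn (z : int) : rat := (-1) ^+ `|z|%N.

(* graded commutator [f,g] = fg - (-1)^{|f||g|} gf in \hat T(V) *)
Definition brk (f g : T) : T := fun w =>
  \sum_(i < (size w).+1)
    (f (take i w) * g (drop i w)
     - sgn (wdeg (take i w) * wdeg (drop i w)) * g (take i w) * f (drop i w)).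

Definition iota (v : vec) : T := fun w =>
  match w with [:: b] => v b | _ => 0 end.

Fixpoint rbr (vs : seq vec) : T :=
  match vs with
  | [::] => zeroT
  | [:: v] => iota v
  | v :: vs' => brk (iota v) (rbr vs')
  end.

Definition span (P : T -> Prop) (g : T) : Prop :=
  exists s : seq (rat * T),
    (forall i, (i < size s)%N -> P (nth (0, zeroT) s i).2) /\
    g = (fun w => \sum_(x <- s) x.1 * x.2 w).

Definition trunc (n : nat) (f : T) : T := fun w => if size w == n then f w else 0.

Definition Lie (n : nat) : T -> Prop :=
  span (fun h => exists vs : seq vec,
          size vs = n /\ (forall i, (i < n)%N -> isV (nth zeroV vs i)) /\ h = rbr vs).

Definition homog (k : int) (f : T) : Prop := forall w, f w != 0 -> wdeg w = k.

(* \hat L(V) (graded: finite sums of homogeneous elements, each of which is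
   an element of the inverse limit of L/L^n, i.e. a sequence of
   length components in L^n(V)) *)
Definition isL (f : T) : Prop :=
  (forall n, Lie n (trunc n f)) /\
  exists ks : seq int, forall w, f w != 0 -> wdeg w \in ks.

Definition Lge (n : nat) (f : T) : Prop :=
  isL f /\ forall w, (size w < n)%N -> f w = 0.

Definition lincomb (a : rat) (f g : T) : T := fun w => a * f w + g w.

Definition isDer (j : int) (th : T -> T) : Prop :=
  (forall f, isL f -> isL (th f)) /\
  (forall k f, isL f -> homog k f -> homog (k + j) (th f)) /\
  (forall a f g, isL f -> isL g -> th (lincomb a f g) = lincomb a (th f) (th g)) /\
  (forall k f g, isL f -> homog k f -> isL g ->
     th (brk f g) = (fun w => brk (th f) g w + sgn (j * k) * brk f (th g) w)).

Definition is_cdgl_diff (d : T -> T) : Prop :=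
  isDer (-1) d /\
  (forall f, isL f -> d (d f) = zeroT) /\
  (forall n f, Lge n f -> Lge n (d f)).

Definition minimal (d : T -> T) : Prop :=
  forall v, isV v -> Lge 2 (d (iota v)).

Definition dbr (i j : int) (th et : T -> T) : T -> T :=
  fun f w => th (et f) w - sgn (i * j) * et (th f) w.

Definition dlincomb (a : rat) (th et : T -> T) : T -> T :=
  fun f => lincomb a (th f) (et f).

Variable Vf : nat -> vec -> Prop.

Definition Lnp (n p : nat) : T -> Prop :=
  span (fun h => exists (vs : seq vec) (al : seq nat),
          size vs = n /\ size al = n /\ sumn al = p /\
          (forall i, (i < n)%N -> Vf (nth 0%N al i) (nth zeroV vs i)) /\
          h = rbr vs).

(* F^{n,p} = \hat L^{n,p}(V) (+) \hat L^{>= n+1}(V) *)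
Definition Fnp (n p : nat) (f : T) : Prop :=
  Lge n f /\ Lnp n p (trunc n f).

Definition Ft (q t : nat) (f : T) : Prop :=
  exists n p : nat, (0 < n)%N /\ (p < n * q)%N /\
    t = ((n.-1 * n) %/ 2 * q + p + 1)%N /\ Fnp n p f.

(* homogeneous degree-j part of \mathcal F^n *)
Definition Fder (q n : nat) (j : int) (th : T -> T) : Prop :=
  isDer j th /\ forall (r : nat) f, (0 < r)%N -> Ft q r f -> Ft q (n + r) (th f).

End FreeLie.

(* The derivations in \mathcal F^n raise the filtration index by n, so closure
   under linear combinations and brackets is formal.  Stability under D = [d, -]
   reduces to d(F^t) ⊂ F^t, which is minimality: by the Leibniz rule d maps
   brackets of length n into \hat L^{>= n+1}, and \hat L^{>= n+1} ⊂ F^{n,p}.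
   Completeness comes from F^t ⊂ \hat L^{>= N} for t large: a derivation lying in
   every \mathcal F^n kills every word, and a Cauchy sequence of derivations is
   stationary on words of bounded length, so its pointwise limit exists and is
   again a derivation in \mathcal F^1. *)

From Pilot Require Import Defs.
From mathcomp Require Import all_boot all_order all_algebra.
From mathcomp Require Import ring zify.
From Stdlib Require Import FunctionalExtensionality.
Import Order.TTheory GRing.Theory Num.Theory.
Local Open Scope ring_scope.
Set Implicit Arguments. Unset Strict Implicit. Unset Printing Implicit Defensive.

Fixpoint all_Prop {A : Type} (P : A -> Prop) (s : seq A) : Prop :=
  if s is x :: s' then P x /\ all_Prop P s' else True.

Lemma all_PropP {A : Type} (P : A -> Prop) x0 s :
  (forall i, (i < size s)%N -> P (nth x0 s i)) <-> all_Prop P s.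
Proof.
elim: s => [|x s IH] //=; split.
- by move=> H; split; [exact: (H 0%N) | apply/IH => i; exact: (H i.+1)].
- by case=> Hx /IH Hs [|i] //=; exact: Hs.
Qed.

Lemma all_Prop_cat {A : Type} (P : A -> Prop) s1 s2 :
  all_Prop P s1 -> all_Prop P s2 -> all_Prop P (s1 ++ s2).
Proof. by elim: s1 => [|x s IH] //= [Hx Hs] H2; split; last exact: IH. Qed.

Lemma all_Prop_map {A C : Type} (P : C -> Prop) (f : A -> C) s :
  all_Prop (fun x => P (f x)) s -> all_Prop P (map f s).
Proof. by elim: s => [|x s IH] //= [Hx Hs]; split; last exact: IH. Qed.

Lemma all_Prop_impl {A : Type} (P Q : A -> Prop) s :
  (forall x, P x -> Q x) -> all_Prop P s -> all_Prop Q s.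
Proof. by move=> H; elim: s => [|x s IH] //= [Hx Hs]; split; [exact: H | exact: IH]. Qed.

Lemma all_Prop_of {A : Type} (P : A -> Prop) s : (forall x, P x) -> all_Prop P s.
Proof. by move=> H; elim: s => //= x s IH; split. Qed.

Lemma sum_pred1_uniq (I : eqType) (r : seq I) x (c : rat) : uniq r -> x \in r ->
  \sum_(k <- r) (if x == k then c else 0) = c.
Proof.
elim: r => [|y r IH] //= /andP[yr Ur]; rewrite in_cons big_cons.
case: eqP => [-> _|_ /= xr]; last by rewrite IH // add0r.
rewrite big1_seq ?addr0 // => k /andP[_ kr].
by case: eqP => // E; rewrite E kr in yr.
Qed.

Lemma descend_le (P : nat -> Prop) : (forall n, P n.+1 -> P n) ->
  forall m n, (m <= n)%N -> P n -> P m.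
Proof. by move=> PS m n; apply: (homo_leq (r := fun A B => B -> A)) => // y x z yx zy /zy. Qed.

Lemma sgnD (a b : int) : sgn (a + b) = sgn a * sgn b.
Proof. by rewrite /sgn -!expN1r expfzDr // oppr_eq0 oner_eq0. Qed.

Lemma sgn_pm1 (z : int) : sgn z = 1 \/ sgn z = -1.
Proof. by rewrite /sgn -signr_odd; case: odd; [right | left]. Qed.

Section FreeLie.
Variable B : choiceType.
Variable deg : B -> int.
Local Notation TT := (T B).
Local Notation z0 := (@zeroT B).
Local Notation span := (@Defs.span B).
Local Notation trunc := (@Defs.trunc B).
Local Notation brk := (brk deg).
Local Notation rbr := (rbr deg).
Local Notation wdeg := (wdeg deg).
Local Notation homog := (homog deg).
Local Notation Lie := (Lie deg).
Local Notation isL := (isL deg).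
Local Notation Lge := (Lge deg).

Definition lin_closed (S : TT -> Prop) :=
  S z0 /\ forall a f g, S f -> S g -> S (lincomb a f g).

Lemma span_ind (P S : TT -> Prop) : lin_closed S -> (forall h, P h -> S h) ->
  forall g, span P g -> S g.
Proof.
move=> [S0 SD] PS g [s [/(all_PropP (fun x : rat * TT => P x.2)) Ps ->]].
elim: s Ps => [|x s IH] /= => [_|[Px Ps]].
  by rewrite (_ : (fun _ => _) = z0) //; apply: functional_extensionality => w; rewrite big_nil.
have -> : (fun w => \sum_(y <- x :: s) y.1 * y.2 w) =
          lincomb x.1 x.2 (fun w => \sum_(y <- s) y.1 * y.2 w).
  by apply: functional_extensionality => w; rewrite big_cons.
by apply: SD; [exact: PS | exact: IH].
Qed.

Lemma span_lin_closed P : lin_closed (span P).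
Proof.
split.
  by exists [::]; split => //; apply: functional_extensionality => w; rewrite big_nil.
move=> a _ _ [s1 [P1 ->]] [s2 [P2 ->]].
exists (map (fun x => (a * x.1, x.2)) s1 ++ s2); split.
  apply/(all_PropP (fun x : rat * TT => P x.2)); apply: all_Prop_cat.
  - by apply: all_Prop_map; apply/(all_PropP (fun x : rat * TT => P x.2) (0, z0)).
  - exact/(all_PropP (fun x : rat * TT => P x.2) (0, z0)).
apply: functional_extensionality => w.
rewrite /lincomb big_cat big_map /= mulr_sumr; congr (_ + _).
by apply: eq_bigr => x _; rewrite mulrA.
Qed.

Lemma span_gen (P : TT -> Prop) h : P h -> span P h.
Proof.
exists [:: (1, h)]; split; first by case.
by apply: functional_extensionality => w; rewrite big_seq1 mul1r.
Qed.

Lemma span_sub (P Q : TT -> Prop) : (forall h, P h -> span Q h) ->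
  forall g, span P g -> span Q g.
Proof. exact: span_ind (span_lin_closed Q). Qed.

Lemma lin_closed_sum (I : Type) (S : TT -> Prop) (r : seq I) (F : I -> TT) :
  lin_closed S -> all_Prop (fun i => S (F i)) r -> S (fun w => \sum_(i <- r) F i w).
Proof.
move=> [S0 SD]; elim: r => [_|x r IH [Sx Sr]] /=.
  by rewrite (_ : (fun _ => _) = z0) //; apply: functional_extensionality => w; rewrite big_nil.
have -> : (fun w => \sum_(i <- x :: r) F i w) = lincomb 1 (F x) (fun w => \sum_(i <- r) F i w).
  by apply: functional_extensionality => w; rewrite big_cons /lincomb mul1r.
by apply: SD => //; exact: IH.
Qed.

(** * The graded bracket *)

Lemma lincomb0 (a : rat) : lincomb a z0 z0 = z0.
Proof. by apply: functional_extensionality => w; rewrite /lincomb /zeroT mulr0 addr0. Qed.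

Lemma trunc_lincomb n a f g : trunc n (lincomb a f g) = lincomb a (trunc n f) (trunc n g).
Proof.
apply: functional_extensionality => w.
by rewrite /Defs.trunc /lincomb; case: ifP; rewrite ?mulr0 ?addr0.
Qed.

Lemma trunc0 n : trunc n z0 = z0.
Proof. by apply: functional_extensionality => w; rewrite /Defs.trunc /zeroT; case: ifP. Qed.

Lemma brk_linl a f g h : brk (lincomb a f g) h = lincomb a (brk f h) (brk g h).
Proof.
apply: functional_extensionality => w.
by rewrite /Defs.brk /lincomb mulr_sumr -big_split /=; apply: eq_bigr => i _; ring.
Qed.

Lemma brk_linr a f g h : brk h (lincomb a f g) = lincomb a (brk h f) (brk h g).
Proof.
apply: functional_extensionality => w.
by rewrite /Defs.brk /lincomb mulr_sumr -big_split /=; apply: eq_bigr => i _; ring.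
Qed.

Lemma brk0l g : brk z0 g = z0.
Proof.
by apply: functional_extensionality => w; rewrite /Defs.brk /zeroT big1 // => i _; ring.
Qed.

Lemma brk0r g : brk g z0 = z0.
Proof.
by apply: functional_extensionality => w; rewrite /Defs.brk /zeroT big1 // => i _; ring.
Qed.

Lemma lin_closed_brkl S g : lin_closed S -> lin_closed (fun f => S (brk f g)).
Proof. by case=> S0 SD; split=> [|a f h Sf Sh]; rewrite ?brk0l ?brk_linl //; exact: SD. Qed.

Lemma lin_closed_brkr S f : lin_closed S -> lin_closed (fun g => S (brk f g)).
Proof. by case=> S0 SD; split=> [|a g h Sg Sh]; rewrite ?brk0r ?brk_linr //; exact: SD. Qed.

Lemma brk_span (P Q : TT -> Prop) f g : span P f -> span Q g ->
  span (fun h => exists p q, [/\ P p, Q q & h = brk p q]) (brk f g).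
Proof.
set R := fun h => _; have SR := span_lin_closed R.
move=> Pf Qg; move: f Pf; apply: (span_ind (lin_closed_brkl g SR)) => p Pp.
move: g Qg; apply: (span_ind (lin_closed_brkr p SR)) => h Qh.
by apply: span_gen; exists p, h.
Qed.

Lemma agree_brk f f' g g' w :
  (forall u, (size u <= size w)%N -> f u = f' u) ->
  (forall u, (size u <= size w)%N -> g u = g' u) -> brk f g w = brk f' g' w.
Proof.
move=> ff' gg'; apply: eq_bigr => i _.
have Htake : (size (take i w) <= size w)%N by rewrite size_take_min geq_minr.
have Hdrop : (size (drop i w) <= size w)%N by rewrite size_drop leq_subr.
by rewrite !ff' // !gg'.
Qed.

Lemma brk_neq0 f g w : brk f g w != 0 -> exists i : nat,
  (f (take i w) != 0 /\ g (drop i w) != 0) \/ (g (take i w) != 0 /\ f (drop i w) != 0).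
Proof.
move=> H.
have [/existsP [i /orP [E|E]]|] := boolP [exists i : 'I_(size w).+1,
  (f (take i w) * g (drop i w) != 0) || (g (take i w) * f (drop i w) != 0)].
- by exists i; left; move: E; rewrite mulf_eq0 negb_or => /andP[].
- by exists i; right; move: E; rewrite mulf_eq0 negb_or => /andP[].
rewrite negb_exists => /forallP all0; case/negP: H; apply/eqP.
rewrite /Defs.brk big1 // => i _; move: (all0 i).
by rewrite negb_or !negbK => /andP[/eqP -> /eqP E]; rewrite -mulrA E mulr0 subr0.
Qed.

Lemma wdeg_cat u v : wdeg (u ++ v) = wdeg u + wdeg v.
Proof. by rewrite /Defs.wdeg big_cat. Qed.

Lemma homog0 k : homog k z0.
Proof. by move=> w; rewrite /zeroT eqxx. Qed.

Lemma homog_lincomb k a f g : homog k f -> homog k g -> homog k (lincomb a f g).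
Proof.
move=> hf hg w; rewrite /lincomb.
by have [->|/hf] := eqVneq (f w) 0; [rewrite mulr0 add0r; exact: hg | ].
Qed.

Lemma homog_brk k l f g : homog k f -> homog l g -> homog (k + l) (brk f g).
Proof.
move=> hf hg w /brk_neq0 [i [[/hf kf /hg lg]|[/hg lg /hf kf]]];
  by rewrite -(cat_take_drop i w) wdeg_cat kf lg // addrC.
Qed.

(* In the concatenation algebra the graded commutator is a difference of
   products, so the Jacobi identity reduces to associativity. *)
Definition tmul (f g : TT) : TT := fun w =>
  \sum_(i < (size w).+1) f (take i w) * g (drop i w).

Lemma tmul_nil f g : tmul f g [::] = f [::] * g [::].
Proof. by rewrite /tmul big_ord1. Qed.

Lemma tmul_cons f g b w :
  tmul f g (b :: w) = f [::] * g (b :: w) + tmul (fun u => f (b :: u)) g w.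
Proof. by rewrite /tmul big_ord_recl. Qed.

Lemma tmulDl c X Y h w : tmul (fun u => c * X u + Y u) h w = c * tmul X h w + tmul Y h w.
Proof. by rewrite /tmul mulr_sumr -big_split; apply: eq_bigr => i _ /=; ring. Qed.

Lemma tmulBl c X Y h w : tmul (fun u => X u - c * Y u) h w = tmul X h w - c * tmul Y h w.
Proof. by rewrite /tmul mulr_sumr -sumrB; apply: eq_bigr => i _ /=; ring. Qed.

Lemma tmulBr c X Y h w : tmul h (fun u => X u - c * Y u) w = tmul h X w - c * tmul h Y w.
Proof. by rewrite /tmul mulr_sumr -sumrB; apply: eq_bigr => i _ /=; ring. Qed.

Lemma tmulA w : forall f g h, tmul (tmul f g) h w = tmul f (tmul g h) w.
Proof.
elim: w => [|b w IH] f g h; first by rewrite !tmul_nil mulrA.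
rewrite !tmul_cons.
have -> : (fun u => tmul f g (b :: u)) =
          (fun u => f [::] * g (b :: u) + tmul (fun u' => f (b :: u')) g u).
  by apply: functional_extensionality => u; rewrite tmul_cons.
by rewrite tmulDl IH tmul_nil; ring.
Qed.

Lemma brk_tmul k l f g : homog k f -> homog l g ->
  brk f g = fun w => tmul f g w - sgn (k * l) * tmul g f w.
Proof.
move=> hf hg; apply: functional_extensionality => w.
rewrite /Defs.brk /tmul mulr_sumr -sumrB; apply: eq_bigr => i _.
have [E|] := eqVneq (g (take i w) * f (drop i w)) 0; first by rewrite -mulrA E !mulr0.
by rewrite mulf_eq0 negb_or => /andP[/hg -> /hf ->]; rewrite -mulrA (mulrC l k).
Qed.

Lemma brk_jacobi ka kx ky a x y : homog ka a -> homog kx x -> homog ky y ->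
  brk (brk a x) y = fun w => brk a (brk x y) w - sgn (ka * kx) * brk x (brk a y) w.
Proof.
move=> ha hx hy.
rewrite (brk_tmul (homog_brk ha hx) hy) (brk_tmul ha (homog_brk hx hy)).
rewrite (brk_tmul hx (homog_brk ha hy)) (brk_tmul ha hx) (brk_tmul hx hy) (brk_tmul ha hy).
apply: functional_extensionality => w.
rewrite !tmulBl !tmulBr !tmulA !mulrDl !mulrDr !sgnD [kx * ka]mulrC.
by case: (sgn_pm1 (ka * kx)) => ->; case: (sgn_pm1 (ka * ky)) => ->;
  case: (sgn_pm1 (kx * ky)) => ->; ring.
Qed.

(** * Right-normed brackets of homogeneous vectors *)

(* The Leibniz rule of [isDer] only applies to homogeneous left factors, hence
   the spanning family [hbr]. *)
Definition homv k (v : vec B) := forall b, v b != 0 -> deg b = k.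
Definition hvec (v : vec B) := isV v /\ exists k, homv k v.
Definition hbr n (h : TT) := exists vs, [/\ size vs = n, all_Prop hvec vs & h = rbr vs].
Definition len_homog n (f : TT) := forall w, f w != 0 -> size w = n.
Definition dpart k (f : TT) : TT := fun w => if wdeg w == k then f w else 0.
Definition vpart k (v : vec B) : vec B := fun b => if deg b == k then v b else 0.

Lemma rbr_cons2 u v vs : rbr [:: u, v & vs] = brk (Defs.iota u) (rbr (v :: vs)).
Proof. by []. Qed.

Lemma homog_iota k v : homv k v -> homog k (Defs.iota v).
Proof.
by move=> hv [|b [|c w]] //=; rewrite ?eqxx // => /hv <-; rewrite /Defs.wdeg big_seq1.
Qed.

Lemma homog_rbr vs : all_Prop hvec vs -> exists k, homog k (rbr vs).
Proof.
elim: vs => [|v [|v' vs] IH]; first by exists 0; exact: homog0.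
  by case=> [[_ [k hv]] _]; exists k; exact: homog_iota.
case=> [[_ [k hv]] Hs]; have [k' hk'] := IH Hs.
by exists (k + k'); rewrite rbr_cons2; apply: homog_brk => //; exact: homog_iota.
Qed.

Lemma len_homog_brk a b f g : len_homog a f -> len_homog b g -> len_homog (a + b) (brk f g).
Proof.
move=> hf hg w /brk_neq0 [i [[/hf af /hg bg]|[/hg bg /hf af]]];
  by rewrite -(cat_take_drop i w) size_cat af bg // addnC.
Qed.

Lemma len_homog_rbr vs : len_homog (size vs) (rbr vs).
Proof.
elim: vs => [|v [|v' vs] IH]; first by move=> w; rewrite /zeroT eqxx.
  by move=> [|b [|c w]] //=; rewrite eqxx.
rewrite rbr_cons2; apply: (len_homog_brk (a := 1)) IH.
by move=> [|b [|c u]] //=; rewrite eqxx.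
Qed.

Lemma brk_iota_span u m g : hvec u -> span (hbr m.+1) g -> span (hbr m.+2) (brk (Defs.iota u) g).
Proof.
move=> Hu; move: g; apply: (span_ind (lin_closed_brkr _ (span_lin_closed _))).
move=> _ [[|v vs] [// [<-] Hvs ->]].
by apply: span_gen; exists [:: u, v & vs].
Qed.

(* Induction on [us] through Jacobi: [[u, X], Y] = [u, [X, Y]] ± [X, [u, Y]]. *)
Lemma brk_rbr_span u us v vs : all_Prop hvec (u :: us) -> all_Prop hvec (v :: vs) ->
  span (hbr (size us + size vs).+2) (brk (rbr (u :: us)) (rbr (v :: vs))).
Proof.
elim: us u v vs => [|u' us IH] u v vs [Hu Hus] Hvs.
  by apply: span_gen; exists [:: u, v & vs].
have [ku hu] := Hu.2; have [kx hx] := @homog_rbr (u' :: us) Hus; have [ky hy] := homog_rbr Hvs.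
rewrite rbr_cons2 (brk_jacobi (homog_iota hu) hx hy).
set A := Defs.iota u; set X := rbr (u' :: us); set Y := rbr (v :: vs).
have -> : (fun w => brk A (brk X Y) w - sgn (ku * kx) * brk X (brk A Y) w) =
          lincomb (- sgn (ku * kx)) (brk X (brk A Y)) (brk A (brk X Y)).
  by apply: functional_extensionality => w; rewrite /lincomb; ring.
apply: (span_lin_closed _).2.
- by have := IH u' u (v :: vs) Hus (conj Hu Hvs); rewrite /= addnS addSn.
- by apply: brk_iota_span => //; rewrite -addSn; exact: IH.
Qed.

Lemma isV_homog_decomp v : isV v -> exists ks : seq int,
  all_Prop (fun k => hvec (vpart k v)) ks /\ forall b, v b = \sum_(k <- ks) vpart k v b.
Proof.
move=> [s Hs]; exists (undup (map deg s)); split.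
  apply/(all_PropP _ 0) => i _; split.
    by exists s => b /Hs; rewrite /vpart => ->; case: ifP.
  exists (nth 0 (undup (map deg s)) i) => b; rewrite /vpart.
  by case: ifP => [/eqP|_]; rewrite ?eqxx.
move=> b; rewrite /vpart; have [bs|bs] := boolP (b \in s).
  by rewrite sum_pred1_uniq ?undup_uniq // mem_undup map_f.
by rewrite Hs // big1 // => k _; case: ifP.
Qed.

Lemma iota_span v : isV v -> span (hbr 1) (Defs.iota v).
Proof.
move=> /isV_homog_decomp [ks [Hks Ev]].
have -> : Defs.iota v = fun w => \sum_(k <- ks) Defs.iota (vpart k v) w.
  by apply: functional_extensionality => [[|b [|c w]]] /=; rewrite ?Ev // big1.
apply: lin_closed_sum (span_lin_closed _) _; apply: all_Prop_impl Hks => k Hk.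
by apply: span_gen; exists [:: vpart k v].
Qed.

Lemma rbr_span v vs : all_Prop (@isV B) (v :: vs) -> span (hbr (size vs).+1) (rbr (v :: vs)).
Proof.
elim: vs v => [|v' vs IH] v [Hv Hs]; first exact: iota_span.
rewrite rbr_cons2; have := brk_span (iota_span Hv) (IH v' Hs); apply: span_sub.
move=> _ [_ [_ [[[|u [|? ?]] [//= _ [Hu _] ->]] [[|w ws] [//= [Hws] Hw ->]] ->]]].
by apply: span_gen; exists [:: u, w & ws]; split; rewrite //= Hws.
Qed.

Lemma Lie0 g : Lie 0 g -> g = z0.
Proof.
apply: (span_ind (S := fun g => g = z0)); last by move=> h [[|? ?] [//= _ [_ ->]]].
by split=> // a f g' -> ->; rewrite lincomb0.
Qed.

Lemma Lie_span n g : Lie n.+1 g -> span (hbr n.+1) g.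
Proof.
apply: span_sub => _ [[|v vs] [//= [<-] [Hv ->]]].
by apply: rbr_span; apply/(all_PropP _ (@zeroV B)).
Qed.

Lemma span_Lie n g : span (hbr n) g -> Lie n g.
Proof.
apply: span_sub => _ [vs [<- Hv ->]].
apply: span_gen; exists vs; split=> //; split=> //.
by apply/all_PropP; apply: all_Prop_impl Hv => x [].
Qed.

Lemma Lie_lin_closed n : lin_closed (Lie n).
Proof. exact: span_lin_closed. Qed.

Lemma Lie_brk a b f g : Lie a f -> Lie b g -> Lie (a + b) (brk f g).
Proof.
case: a => [/Lie0 -> _|a]; first by rewrite brk0l; exact: (Lie_lin_closed _).1.
case: b => [_ /Lie0 ->|b]; first by rewrite brk0r; exact: (Lie_lin_closed _).1.
move=> /Lie_span Hf /Lie_span Hg; apply: span_Lie.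
apply: span_sub (brk_span Hf Hg).
move=> _ [_ [_ [[[|u us] [//= [<-] Hu ->]] [[|v vs] [//= [<-] Hv ->]] ->]]].
by rewrite addSn addnS; exact: brk_rbr_span.
Qed.

Lemma Lie_len_homog n g : Lie n g -> len_homog n g.
Proof.
apply: span_ind => [|_ [vs [<- [_ ->]]]]; last exact: len_homog_rbr.
split=> [w|a f g' Hf Hg w]; first by rewrite /zeroT eqxx.
by rewrite /lincomb; have [->|/Hf] := eqVneq (f w) 0; [rewrite mulr0 add0r; exact: Hg|].
Qed.

Lemma trunc_len_homog m n X : len_homog m X -> trunc n X = if m == n then X else z0.
Proof.
move=> HX; apply: functional_extensionality => w; rewrite /Defs.trunc /zeroT.
have [X0|/HX ->] := eqVneq (X w) 0; first by rewrite X0; do 2 case: ifP.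
by case: ifP.
Qed.

Lemma Lie_trunc m n X : Lie m X -> Lie n (trunc n X).
Proof.
move=> HX; rewrite (trunc_len_homog n (Lie_len_homog HX)).
by case: eqP => [<- //|_]; exact: (Lie_lin_closed _).1.
Qed.

Lemma dpart_homog k k' h : homog k' h -> dpart k h = if k' == k then h else z0.
Proof.
move=> Hh; apply: functional_extensionality => w; rewrite /dpart.
have [h0|/Hh ->] := eqVneq (h w) 0; first by rewrite h0; do 2 case: ifP.
by case: ifP.
Qed.

Lemma dpart_lincomb k a f g : dpart k (lincomb a f g) = lincomb a (dpart k f) (dpart k g).
Proof.
apply: functional_extensionality => w.
by rewrite /dpart /lincomb; case: ifP; rewrite ?mulr0 ?addr0.
Qed.

Lemma Lie_dpart n k g : Lie n g -> Lie n (dpart k g).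
Proof.
have dpart0 : dpart k z0 = z0 by rewrite (dpart_homog _ (homog0 0)); case: ifP.
case: n => [/Lie0 ->|n /Lie_span]; first by rewrite dpart0; exact: (Lie_lin_closed _).1.
apply: (span_ind (S := fun g => Lie n.+1 (dpart k g))) => [|h Hh].
  split=> [|a f g' Hf Hg]; first by rewrite dpart0; exact: (Lie_lin_closed _).1.
  by rewrite dpart_lincomb; exact: (Lie_lin_closed _).2.
have [vs [_ Hv Eh]] := Hh; have [k' Hk'] := homog_rbr Hv; rewrite -Eh in Hk'.
rewrite (dpart_homog k Hk'); case: ifP => _; last exact: (Lie_lin_closed _).1.
by apply: span_Lie; exact: span_gen.
Qed.

(** * The completed free Lie algebra *)

Lemma isL0 : isL z0.
Proof.
split=> [n|]; first by rewrite trunc0; exact: (Lie_lin_closed _).1.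
by exists [::] => w; rewrite /zeroT eqxx.
Qed.

Lemma isL_lincomb a f g : isL f -> isL g -> isL (lincomb a f g).
Proof.
move=> [Lf [ks1 K1]] [Lg [ks2 K2]]; split=> [n|].
  by rewrite trunc_lincomb; apply: (Lie_lin_closed _).2; [exact: Lf | exact: Lg].
exists (ks1 ++ ks2) => w; rewrite /lincomb mem_cat.
have [->|/K1 -> //] := eqVneq (f w) 0.
by rewrite mulr0 add0r => /K2 ->; rewrite orbT.
Qed.

Lemma isL_lin_closed : lin_closed isL.
Proof. by split; [exact: isL0 | exact: isL_lincomb]. Qed.

Definition fsum (F : nat -> TT) m : TT := fun w => \sum_(0 <= a < m) F a w.

Lemma fsum_trunc f n w : (size w <= n)%N -> fsum (trunc^~ f) n.+1 w = f w.
Proof.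
move=> Hw; rewrite /fsum /Defs.trunc sum_pred1_uniq ?iota_uniq //.
by rewrite mem_index_iota ltnS.
Qed.

Lemma brk_fsum (S : TT -> Prop) F G m m' : lin_closed S ->
  (forall a b, S (brk (F a) (G b))) -> S (brk (fsum F m) (fsum G m')).
Proof.
move=> SS SFG; apply: lin_closed_sum (lin_closed_brkl _ SS) _.
apply: all_Prop_of => a; apply: lin_closed_sum (lin_closed_brkr _ SS) _.
exact: all_Prop_of.
Qed.

(* The length-n part of [f, g] only involves the components of f and g of
   length at most n, which are finite sums of brackets. *)
Lemma isL_brk f g : isL f -> isL g -> isL (brk f g).
Proof.
move=> [Lf [ks1 K1]] [Lg [ks2 K2]]; split=> [n|].
  have -> : trunc n (brk f g) =
            trunc n (brk (fsum (trunc^~ f) n.+1) (fsum (trunc^~ g) n.+1)).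
    apply: functional_extensionality => w; rewrite /Defs.trunc; case: eqP => // Ew.
    by apply: agree_brk => u Hu; rewrite fsum_trunc // -Ew.
  apply: (brk_fsum (S := fun h => Lie n (trunc n h))) => [|a b].
    split=> [|c u v Lu Lv]; first by rewrite trunc0; exact: (Lie_lin_closed _).1.
    by rewrite trunc_lincomb; exact: (Lie_lin_closed _).2.
  by apply: Lie_trunc; exact: Lie_brk.
exists [seq x + y | x <- ks1, y <- ks2] => w /brk_neq0 [i [[/K1 k1 /K2 k2]|[/K2 k2 /K1 k1]]];
  rewrite -(cat_take_drop i w) wdeg_cat; last rewrite addrC; exact: allpairs_f.
Qed.

Lemma Lie_rbr vs : all_Prop (@isV B) vs -> Lie (size vs) (rbr vs).
Proof. by move=> Hv; apply: span_gen; exists vs; do 2 split=> //; exact/all_PropP. Qed.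

Lemma isL_iota v : isV v -> isL (Defs.iota v).
Proof.
move=> Hv; split=> [n|]; first by apply: (@Lie_trunc 1); exact: (@Lie_rbr [:: v]).
case: Hv => s Hs; exists (map deg s) => [[|b [|c w]]] //=; rewrite ?eqxx // => Hb.
rewrite /Defs.wdeg big_seq1 map_f //.
by apply: contraNT Hb => /Hs ->; rewrite eqxx.
Qed.

Lemma isL_rbr vs : all_Prop (@isV B) vs -> isL (rbr vs).
Proof.
elim: vs => [_|v [|v' vs] IH [Hv Hs]]; [exact: isL0 | exact: isL_iota |].
by rewrite rbr_cons2; apply: isL_brk; [exact: isL_iota | exact: IH].
Qed.

Lemma Lie_isL n g : Lie n g -> isL g.
Proof.
apply: (span_ind isL_lin_closed) => _ [vs [<- [Hv ->]]].
by apply: isL_rbr; exact/(all_PropP _ (@zeroV B)).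
Qed.

Lemma isL_nil f : isL f -> f [::] = 0.
Proof. by case=> /(_ 0%N) /Lie0 /(congr1 (fun F => F [::])). Qed.

Lemma isL_dpart k f : isL f -> isL (dpart k f).
Proof.
case=> Lf _; split=> [n|].
  have -> : trunc n (dpart k f) = dpart k (trunc n f).
    by apply: functional_extensionality => w; rewrite /Defs.trunc /dpart; do 2 case: ifP.
  exact: Lie_dpart.
by exists [:: k] => w; rewrite /dpart inE; case: ifP.
Qed.

Lemma Lge_lin_closed n : lin_closed (Lge n).
Proof.
split=> [|a f g [Lf f0] [Lg g0]]; first by split; [exact: isL0 | by []].
split=> [|w Hw]; first exact: isL_lincomb.
by rewrite /lincomb f0 // g0 // mulr0 addr0.
Qed.

Lemma Lge_le m n f : (m <= n)%N -> Lge n f -> Lge m f.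
Proof. by move=> mn [Lf f0]; split=> // w Hw; apply: f0; exact: leq_trans Hw mn. Qed.

Lemma Lge_brk a b f g : Lge a f -> Lge b g -> Lge (a + b) (brk f g).
Proof.
move=> [Lf f0] [Lg g0]; split=> [|w Hw]; first exact: isL_brk.
rewrite /Defs.brk big1 // => i _.
have Hi : (size (take i w) + size (drop i w) < a + b)%N by rewrite -size_cat cat_take_drop.
have fg0 : f (take i w) * g (drop i w) = 0.
  have [ia|ai] := ltnP (size (take i w)) a; first by rewrite f0 // mul0r.
  by rewrite g0 ?mulr0 //; lia.
have gf0 : g (take i w) * f (drop i w) = 0.
  have [ib|bi] := ltnP (size (take i w)) b; first by rewrite g0 // mul0r.
  by rewrite f0 ?mulr0 //; lia.
by rewrite fg0 -mulrA gf0 mulr0 subr0.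
Qed.

Lemma Lie_Lge n g : Lie n g -> Lge n g.
Proof.
move=> Lg; split=> [|w Hw]; first exact: Lie_isL Lg.
by apply/eqP; apply: contraTT Hw => /(Lie_len_homog Lg) ->; rewrite ltnn.
Qed.

(** * Derivations *)

Local Notation isDer := (isDer deg).

Lemma der0 j th : isDer j th -> th z0 = z0.
Proof.
case=> _ [_ [thD _]]; have := thD (-1) z0 z0 isL0 isL0; rewrite lincomb0 => E.
apply: functional_extensionality => w; have := congr1 (fun F => F w) E.
by rewrite /lincomb /zeroT => ->; ring.
Qed.

Lemma der_leibniz j k th f g : isDer j th -> isL f -> homog k f -> isL g ->
  th (brk f g) = lincomb (sgn (j * k)) (brk f (th g)) (brk (th f) g).
Proof.
case=> _ [_ [_ thL]] Lf hf Lg; rewrite (thL k f g Lf hf Lg).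
by apply: functional_extensionality => w; rewrite /lincomb addrC.
Qed.

Lemma der_wdeg j th ks f : isDer j th -> isL f ->
  (forall w, f w != 0 -> wdeg w \in ks) ->
  forall w, th f w != 0 -> wdeg w \in map (fun k => k + j) ks.
Proof.
move=> Dth; have [_ [thh [thD _]]] := Dth.
elim: ks f => [|k ks IH] f Lf Hks w.
  have -> : f = z0.
    by apply: functional_extensionality => u; apply/eqP; apply: contraT => /Hks.
  by rewrite (der0 Dth) /zeroT eqxx.
pose P := dpart k f; pose R := lincomb (-1) P f.
have LP : isL P := isL_dpart k Lf.
have LR : isL R := isL_lincomb (-1) LP Lf.
have Ef : f = lincomb 1 P R by apply: functional_extensionality => u; rewrite /R /lincomb; ring.
rewrite Ef (thD 1 P R LP LR) /lincomb mul1r map_cons in_cons.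
have [thP0|thP] := eqVneq (th P w) 0.
  rewrite thP0 add0r => /(IH R LR) -> //; first by rewrite orbT.
  move=> u; rewrite /R /lincomb /P /dpart; case: ifP => [_|/negbT ku].
    by rewrite mulN1r addNr eqxx.
  by rewrite mulr0 add0r => /Hks; rewrite in_cons (negbTE ku).
have hP : homog k P by move=> u; rewrite /P /dpart; case: ifP => [/eqP //|_]; rewrite eqxx.
by rewrite (thh k P LP hP w thP) eqxx.
Qed.

Lemma isDer0 j : isDer j (fun _ => z0).
Proof.
split=> [_ _|]; first exact: isL0.
split=> [k f _ _|]; first exact: homog0.
split=> [a f g _ _|k f g _ _ _]; first by rewrite lincomb0.
by rewrite brk0l brk0r; apply: functional_extensionality => w; rewrite /zeroT; ring.
Qed.

Lemma isDer_lincomb j c th et : isDer j th -> isDer j et -> isDer j (dlincomb c th et).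
Proof.
move=> Dth Det; have [thL [thh [thD _]]] := Dth; have [etL [eth [etD _]]] := Det.
rewrite /dlincomb; split=> [f Lf|]; first by apply: isL_lincomb; [exact: thL | exact: etL].
split=> [k f Lf hf|]; first by apply: homog_lincomb; [exact: thh | exact: eth].
split=> [a f g Lf Lg|k f g Lf hf Lg].
  rewrite thD // etD //.
  by apply: functional_extensionality => w; rewrite /lincomb; ring.
rewrite (der_leibniz (k := k) Dth) // (der_leibniz (k := k) Det) // brk_linl brk_linr.
by apply: functional_extensionality => w; rewrite /lincomb; ring.
Qed.

Lemma dbrE i j (th et : TT -> TT) f :
  dbr i j th et f = lincomb (- sgn (i * j)) (et (th f)) (th (et f)).
Proof. by apply: functional_extensionality => w; rewrite /dbr /lincomb; ring. Qed.

Lemma isDer_dbr i j th et : isDer i th -> isDer j et -> isDer (i + j) (dbr i j th et).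
Proof.
move=> Dth Det; have [thL [thh [thD _]]] := Dth; have [etL [eth [etD _]]] := Det.
split=> [f Lf|]; first by rewrite dbrE; apply: isL_lincomb; [exact/etL/thL | exact/thL/etL].
split=> [k f Lf hf|].
  rewrite dbrE; apply: homog_lincomb; rewrite [i + j]addrC addrA.
    by rewrite addrAC; apply: eth; [exact: thL | exact: thh].
  by apply: thh; [exact: etL | exact: eth].
split=> [a f g Lf Lg|k f g Lf hf Lg];
  move: (thL f Lf) (thL g Lg) (etL f Lf) (etL g Lg) => thLf thLg etLf etLg.
  rewrite !dbrE (thD a f g) // (etD a f g) // thD ?etD //.
  by apply: functional_extensionality => w; rewrite /lincomb; ring.
rewrite !dbrE (der_leibniz (k := k) Dth) // (der_leibniz (k := k) Det) //.
rewrite thD ?etD //; try exact: isL_brk.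
rewrite (der_leibniz (k := k) Dth) // (der_leibniz (k := k + j) Dth) //; last exact: eth.
rewrite (der_leibniz (k := k) Det) // (der_leibniz (k := k + i) Det) //; last exact: thh.
apply: functional_extensionality => w; rewrite !brk_linl !brk_linr /lincomb.
rewrite (mulrDr i k j) (mulrDr j k i) (mulrDl i j k) !sgnD (mulrC j i).
by case: (sgn_pm1 (i * k)) => ->; case: (sgn_pm1 (i * j)) => ->;
  case: (sgn_pm1 (j * k)) => ->; ring.
Qed.

(** * Minimality *)

Section Minimal.

Variable d : TT -> TT.
Hypothesis d_cdgl : is_cdgl_diff deg d.
Hypothesis d_min : minimal deg d.

Lemma d_rbr_Lge v vs : all_Prop hvec (v :: vs) -> Lge (size vs).+2 (d (rbr (v :: vs))).
Proof.
have Dd := d_cdgl.1.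
elim: vs v => [|v' vs IH] v [Hv Hvs]; first exact: d_min Hv.1.
have [k hv] := Hv.2; have LA := isL_iota Hv.1.
have HvsV : all_Prop (@isV B) (v' :: vs) :=
  all_Prop_impl (s := v' :: vs) (fun x (H : hvec x) => H.1) Hvs.
rewrite rbr_cons2 (der_leibniz Dd LA (homog_iota hv) (isL_rbr HvsV)).
apply: (Lge_lin_closed _).2.
- apply: Lge_le (Lge_brk (Lie_Lge (@Lie_rbr [:: v] (conj Hv.1 I))) (IH v' Hvs)) => /=; lia.
- apply: Lge_le (Lge_brk (d_min Hv.1) (Lie_Lge (Lie_rbr HvsV))) => /=; lia.
Qed.

Lemma d_Lie_Lge n g : Lie n.+1 g -> Lge n.+2 (d g).
Proof.
have [_ [_ [dD _]]] := d_cdgl.1.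
move=> /Lie_span Sg; suff [] : isL g /\ Lge n.+2 (d g) by [].
apply: (span_ind (S := fun g => isL g /\ Lge n.+2 (d g))) Sg => [|_ [[|v vs] [// [<-] Hv ->]]].
  split=> [|a f g' [Lf Lgf] [Lg' Lgg']]; last first.
    by split; [exact: isL_lincomb | rewrite dD //; exact: (Lge_lin_closed _).2].
  by rewrite (der0 d_cdgl.1); split; [exact: isL0 | exact: (Lge_lin_closed _).1].
split; last exact: d_rbr_Lge.
by apply: isL_rbr; apply: all_Prop_impl Hv => x [].
Qed.

Lemma d_Lge_succ n f : (0 < n)%N -> Lge n f -> Lge n.+1 (d f).
Proof.
have [_ [_ [dD _]]] := d_cdgl.1.
move=> n_gt0 [Lf f0]; have LTf : Lie n (trunc n f) := Lf.1 n.
pose R := lincomb (-1) (trunc n f) f.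
have R0 : Lge n.+1 R.
  split=> [|w Hw]; first exact: isL_lincomb (Lie_isL LTf) Lf.
  rewrite /R /lincomb /Defs.trunc; case: eqP => Ew; first by ring.
  by rewrite mulr0 add0r; apply: f0; move: Hw Ew; lia.
have -> : f = lincomb 1 (trunc n f) R.
  by apply: functional_extensionality => w; rewrite /R /lincomb; ring.
rewrite dD; [|exact: Lie_isL LTf | exact: R0.1].
apply: (Lge_lin_closed _).2; last exact: d_cdgl.2.2.
by case: n n_gt0 {f0 R R0} LTf => // n _; exact: d_Lie_Lge.
Qed.

End Minimal.

(** * The filtrations F^t and \mathcal F^n *)

Section Filtration.

Variable Vf : nat -> vec B -> Prop.
Variable q : nat.
Hypothesis q_gt0 : (0 < q)%N.
Hypothesis Vf0 : forall v, Vf 0%N v <-> isV v.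
Hypothesis VfS : forall a v, Vf a.+1 v -> Vf a v.

Local Notation Ft := (Ft deg Vf q).
Local Notation Fnp := (Fnp deg Vf).
Local Notation Lnp := (Lnp deg Vf).

(* F^t = F^{n,p} for t = block n + p + 1 and p < n q: the blocks of indices
   attached to the successive lengths n tile the positive integers. *)
Definition block n := ((n.-1 * n) %/ 2 * q)%N.

Lemma blockS n : block n.+1 = (block n + n * q)%N.
Proof.
rewrite /block; case: n => [|n] /=; first by rewrite !(mul0n, muln0, div0n).
by rewrite (_ : n.+1 * n.+2 = n.+1 * 2 + n * n.+1)%N ?divnMDl // ?mulnDl 1?addnC //; lia.
Qed.

Lemma leq_block : {homo block : m n / (m <= n)%N}.
Proof. by apply: homo_leq leqnn leq_trans _ => n; rewrite blockS leq_addr. Qed.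

Lemma block_ge n : (n <= block n.+1)%N.
Proof.
elim: n => [|n IH] //; rewrite blockS.
suff : (n.+1 <= n.+1 * q)%N by lia.
by rewrite leq_pmulr.
Qed.

Lemma block_lt n n' p : (n < n')%N -> (p < n * q)%N -> (block n + p < block n')%N.
Proof.
move=> nn' pn; apply: (@leq_trans (block n.+1)); last exact: leq_block.
by rewrite blockS ltn_add2l.
Qed.

Lemma block_decomp t : exists n p, [/\ (0 < n)%N, (p < n * q)%N & t = (block n + p)%N].
Proof.
elim: t => [|t [n [p [n_gt0 pn ->]]]]; first by exists 1%N, 0%N; rewrite mul1n.
have [pn'|] := ltnP p.+1 (n * q); first by exists n, p.+1; rewrite addnS.
move=> np; have Ep : p.+1 = (n * q)%N by apply/eqP; rewrite eqn_leq np pn.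
by exists n.+1, 0%N; rewrite muln_gt0 q_gt0 blockS addn0 -Ep addnS.
Qed.

Lemma block_decomp_uniq n p n' p' : (p < n * q)%N -> (p' < n' * q)%N ->
  (block n + p = block n' + p')%N -> n = n' /\ p = p'.
Proof.
move=> pn pn' E; suff En : n = n' by subst n'; split=> //; lia.
case: (ltngtP n n') => // nn'.
- by have := block_lt nn' pn; rewrite E; lia.
- by have := block_lt nn' pn'; rewrite -E; lia.
Qed.

Lemma Fnp_Ft t n p f : (0 < n)%N -> (p < n * q)%N -> t = (block n + p + 1)%N ->
  Fnp n p f -> Ft t f.
Proof. by move=> n_gt0 pn Et Ff; exists n, p. Qed.

Lemma Ft_Fnp t n p f : Ft t f -> (p < n * q)%N -> t = (block n + p + 1)%N -> Fnp n p f.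
Proof.
move=> [n' [p' [_ [pn' [Et Ff]]]]] pn E.
have [<- <-] : n' = n /\ p' = p by apply: block_decomp_uniq => //; move: Et; rewrite E /block; lia.
exact: Ff.
Qed.

Lemma Fnp0 n p : Fnp n p z0.
Proof. by split; [exact: (Lge_lin_closed _).1 | rewrite trunc0; exact: (span_lin_closed _).1]. Qed.

Lemma Fnp_lincomb n p a f g : Fnp n p f -> Fnp n p g -> Fnp n p (lincomb a f g).
Proof.
move=> [Lf Tf] [Lg Tg]; split; first exact: (Lge_lin_closed _).2.
by rewrite trunc_lincomb; exact: (span_lin_closed _).2.
Qed.

Lemma Vf_le a b v : (b <= a)%N -> Vf a v -> Vf b v.
Proof. exact: descend_le (fun a => VfS (a := a) (v := v)) b a. Qed.

Lemma sumn_decr p (al : seq nat) : sumn al = p.+1 -> exists al' : seq nat,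
  [/\ size al' = size al, sumn al' = p & forall i, (nth 0 al' i <= nth 0 al i)%N].
Proof.
elim: al p => [|[|a] al IH] p //=.
- by rewrite add0n => /IH [al' [<- <- le_al']]; exists (0%N :: al'); split=> // [[]].
- by case=> <-; exists (a :: al); split=> // [[]].
Qed.

Lemma Lnp_succ n p g : Lnp n p.+1 g -> Lnp n p g.
Proof.
apply: span_sub => _ [vs [al [Hvs [Hal [/sumn_decr [al' [Hal' Hp le_al']] [HV ->]]]]]].
apply: span_gen; exists vs, al'; do 4 (split; rewrite ?Hal' //).
by move=> i Hi; apply: Vf_le (HV i Hi).
Qed.

Lemma Fnp_succ n p f : Fnp n p.+1 f -> Fnp n p f.
Proof. by case=> Lf Tf; split=> //; exact: Lnp_succ. Qed.

Lemma Lge_Fnp n p f : Lge n.+1 f -> Fnp n p f.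
Proof.
move=> Lf; split; first exact: Lge_le Lf.
have -> : trunc n f = z0.
  apply: functional_extensionality => w; rewrite /Defs.trunc /zeroT.
  by case: eqP => // Ew; apply: Lf.2; rewrite Ew.
exact: (span_lin_closed _).1.
Qed.

Lemma Ft_succ t f : (0 < t)%N -> Ft t.+1 f -> Ft t f.
Proof.
move=> t_gt0 [n [[|p] [n_gt0 [pn [Et Ff]]]]]; last first.
  by apply: (@Fnp_Ft t n p) => //; [exact: ltnW | move: Et; rewrite /block; lia | exact: Fnp_succ].
case: n n_gt0 pn Et Ff => [|[|m]] // _ pn Et Ff; first by move: Et t_gt0; rewrite /block; lia.
have mq : (0 < m.+1 * q)%N by rewrite muln_gt0 q_gt0.
apply: (@Fnp_Ft t m.+1 (m.+1 * q).-1) => //; last exact: Lge_Fnp Ff.1.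
- by rewrite prednK.
- by move: Et; rewrite -/(block m.+2) blockS; move: mq; lia.
Qed.

Lemma Ft_le t t' f : (0 < t)%N -> (t <= t')%N -> Ft t' f -> Ft t f.
Proof.
case: t => // t _; case: t' => // t'; rewrite ltnS.
by apply: (descend_le (P := fun t => Ft t.+1 f)) => n; exact: Ft_succ.
Qed.

Lemma Ft0 t : (0 < t)%N -> Ft t z0.
Proof.
case: t => // t _; have [n [p [n_gt0 pn Et]]] := block_decomp t.
by apply: (Fnp_Ft n_gt0 pn); [rewrite Et addn1 | exact: Fnp0].
Qed.

Lemma Ft_lincomb t a f g : Ft t f -> Ft t g -> Ft t (lincomb a f g).
Proof.
move=> Ff Fg; have [n [p [n_gt0 [pn [Et Fnf]]]]] := Ff.
by apply: (Fnp_Ft n_gt0 pn Et); apply: Fnp_lincomb => //; exact: Ft_Fnp Fg pn Et.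
Qed.

Lemma Ft_isL t f : Ft t f -> isL f.
Proof. by case=> [n [p [_ [_ [_ [[Lf _] _]]]]]]. Qed.

Lemma Ft_Lge t N f : Ft t f -> (block N < t)%N -> Lge N f.
Proof.
move=> [n [p [_ [pn [Et [Lf _]]]]]] Nt.
have [Nn|nN] := leqP N n; first exact: Lge_le Lf.
by have := block_lt nN pn; move: Et Nt; rewrite /block; lia.
Qed.

Lemma isL_Ft1 f : isL f -> Ft 1 f.
Proof.
move=> Lf; apply: (@Fnp_Ft 1 1 0) => //; first by rewrite mul1n.
split.
  by split=> // w; rewrite ltnS leqn0 => /nilP ->; exact: isL_nil.
apply: span_sub (Lf.1 1%N) => _ [[|v [|? ?]] [// _ [Hv ->]]].
apply: span_gen; exists [:: v], [:: 0%N]; do 4 split=> //.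
by case=> // _; apply/Vf0; exact: (Hv 0%N).
Qed.

Lemma Ft_agree t G G' : Ft t G' -> isL G ->
  (forall w, (size w <= t)%N -> G w = G' w) -> Ft t G.
Proof.
move=> [n [p [n_gt0 [pn [Et [[_ G'0] TG']]]]]] LG GG'.
have nt : (n <= t)%N.
  by case: n n_gt0 {pn TG' G'0} Et => // n _ ->; rewrite -/(block n.+1); have := block_ge n; lia.
apply: (Fnp_Ft n_gt0 pn Et); split.
  by split=> // w Hw; rewrite GG' ?G'0 //; apply: leq_trans nt; exact: ltnW.
have -> // : trunc n G = trunc n G'.
apply: functional_extensionality => w; rewrite /Defs.trunc; case: eqP => // Ew.
by rewrite GG' // Ew.
Qed.



Lemma d_Ft d t f : is_cdgl_diff deg d -> minimal deg d -> Ft t f -> Ft t (d f).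
Proof.
move=> d_cdgl d_min [n [p [n_gt0 [pn [Et [Lf _]]]]]].
by apply: (Fnp_Ft n_gt0 pn Et); apply: Lge_Fnp; exact: d_Lge_succ.
Qed.

Local Notation Fder := (Fder deg Vf q).

Lemma Fder0 n j : Fder n j (fun _ => z0).
Proof. by split=> [|r f r_gt0 _]; [exact: isDer0 | apply: Ft0; rewrite addn_gt0 r_gt0 orbT]. Qed.

Lemma Fder_lincomb n j c th et : Fder n j th -> Fder n j et -> Fder n j (dlincomb c th et).
Proof.
move=> [Dth Fth] [Det Fet]; split=> [|r f r_gt0 Ff]; first exact: isDer_lincomb.
by apply: Ft_lincomb; [exact: Fth | exact: Fet].
Qed.

Lemma Fder_succ n j th : (0 < n)%N -> Fder n.+1 j th -> Fder n j th.
Proof.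
move=> n_gt0 [Dth Fth]; split=> // r f r_gt0 Ff.
by apply: Ft_le (Fth r f r_gt0 Ff); rewrite ?addn_gt0 ?n_gt0 ?addSn.
Qed.

Lemma Fder_le n m j th : (0 < n)%N -> (n <= m)%N -> Fder m j th -> Fder n j th.
Proof.
case: n => // n _; case: m => // m; rewrite ltnS.
by apply: (descend_le (P := fun n => Fder n.+1 j th)) => k; exact: Fder_succ.
Qed.

Lemma Fder_dbr n m i j th et :
  Fder n i th -> Fder m j et -> Fder (n + m) (i + j) (dbr i j th et).
Proof.
move=> [Dth Fth] [Det Fet]; split=> [|r f r_gt0 Ff]; first exact: isDer_dbr.
have r_gt0' k : (0 < k + r)%N by rewrite addn_gt0 r_gt0 orbT.
rewrite dbrE; apply: Ft_lincomb.
- by rewrite (addnC n m) -addnA; apply: Fet; [exact: r_gt0' | exact: Fth].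
- by rewrite -addnA; apply: Fth; [exact: r_gt0' | exact: Fet].
Qed.

Lemma Fder_dbr_d d n j th : is_cdgl_diff deg d -> minimal deg d ->
  Fder n j th -> Fder n (-1 + j) (dbr (-1) j d th).
Proof.
move=> d_cdgl d_min [Dth Fth]; split=> [|r f r_gt0 Ff]; first exact: isDer_dbr d_cdgl.1 Dth.
have dF := d_Ft d_cdgl d_min.
by rewrite dbrE; apply: Ft_lincomb; [apply: Fth => //; exact: dF | apply: dF; exact: Fth].
Qed.

(** * Completeness *)

(* F^t ⊂ \hat L^{>= L+1} as soon as t >= depth L. *)
Definition depth L := (block L.+1).+1.

Lemma leq_depth a b : (a <= b)%N -> (depth a <= depth b)%N.
Proof. by move=> ab; rewrite ltnS leq_block. Qed.

Lemma Fder_vanish L n j et f w : (depth L <= n)%N -> Fder n j et -> isL f ->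
  (size w <= L)%N -> et f w = 0.
Proof.
move=> Ln [_ Fet] Lf wL.
have etLge : Lge L.+1 (et f).
  by apply: Ft_Lge (Fet 1%N f isT (isL_Ft1 Lf)) _; rewrite /depth in Ln; lia.
exact: etLge.2.
Qed.

Lemma Fder_inj j th : (forall n, (0 < n)%N -> Fder n j th) -> forall f, isL f -> th f = z0.
Proof.
move=> Fth f Lf; apply: functional_extensionality => w.
exact: (Fder_vanish (leqnn _) (Fth (depth (size w)) isT) Lf (leqnn _)).
Qed.

Section Limit.
Variable j : int.
Variable th : nat -> TT -> TT.
Hypothesis th_F1 : forall n, (0 < n)%N -> Fder 1 j (th n).
Hypothesis th_cauchy : forall n, (0 < n)%N -> Fder n j (dlincomb (-1) (th n) (th n.+1)).

Lemma th_telescope n k : (0 < n)%N -> Fder n j (dlincomb (-1) (th n) (th (n + k))).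
Proof.
move=> n_gt0; elim: k => [|k IH].
  have -> : dlincomb (-1) (th n) (th (n + 0)%N) = (fun _ => z0).
    rewrite addn0; do 2 apply: functional_extensionality => ?.
    by rewrite /dlincomb /lincomb /zeroT; ring.
  exact: Fder0.
have -> : dlincomb (-1) (th n) (th (n + k.+1)%N) =
    dlincomb 1 (dlincomb (-1) (th n) (th (n + k)%N)) (dlincomb (-1) (th (n + k)%N) (th (n + k).+1)).
  by rewrite addnS; do 2 apply: functional_extensionality => ?; rewrite /dlincomb /lincomb; ring.
apply: Fder_lincomb => //; apply: (Fder_le n_gt0 (leq_addr _ _)).
by apply: th_cauchy; rewrite addn_gt0 n_gt0.
Qed.

Lemma th_stable f L n m w : isL f -> (depth L <= n)%N -> (n <= m)%N -> (size w <= L)%N ->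
  th m f w = th n f w.
Proof.
move=> Lf Ln nm wL; have n_gt0 : (0 < n)%N by apply: leq_trans Ln.
have := Fder_vanish Ln (th_telescope (m - n) n_gt0) Lf wL.
by rewrite subnKC // /dlincomb /lincomb => /eqP; rewrite mulN1r addrC subr_eq0 => /eqP.
Qed.

(* On words of length at most L the sequence is stationary from depth L on. *)
Definition th_lim f : TT := fun w => th (depth (size w)) f w.

Lemma th_limE f m L w : isL f -> (depth L <= m)%N -> (size w <= L)%N ->
  th_lim f w = th m f w.
Proof.
move=> Lf Lm wL; rewrite /th_lim; symmetry.
by apply: (th_stable (L := size w)) => //; apply: leq_trans Lm; exact: leq_depth.
Qed.

Lemma isDer_th_lim : isDer j th_lim.
Proof.
have Dth L : isDer j (th (depth L)) := (th_F1 (n := depth L) isT).1.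
split=> [f Lf|]; [split=> [n|] | split=> [k f Lf hf w|]].
- have -> : trunc n (th_lim f) = trunc n (th (depth n) f).
    apply: functional_extensionality => w; rewrite /Defs.trunc; case: eqP => // Ew.
    by apply: (th_limE (L := n)); rewrite ?Ew.
  exact: ((Dth n).1 f Lf).1 n.
- have [_ [ks Hks]] := Lf; exists (map (fun k => k + j) ks) => w.
  exact: (der_wdeg (Dth (size w)) Lf Hks).
- exact: (Dth (size w)).2.1 k f Lf hf w.
split=> [a f g Lf Lg|k f g Lf hf Lg]; apply: functional_extensionality => w.
  by rewrite /th_lim ((Dth (size w)).2.2.1 a f g Lf Lg).
rewrite {1}/th_lim ((Dth (size w)).2.2.2 k f g Lf hf Lg) /=.
by congr (_ + _ * _); apply: agree_brk => u Hu //; symmetry; exact: (th_limE (L := size w)).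
Qed.

Lemma Fder1_th_lim : Fder 1 j th_lim.
Proof.
split=> [|r f r_gt0 Ff]; first exact: isDer_th_lim.
apply: (Ft_agree (G' := th (depth (1 + r)) f)).
- exact: (th_F1 (n := depth (1 + r)) isT).2 r f r_gt0 Ff.
- exact: isDer_th_lim.1 _ (Ft_isL Ff).
- by move=> w Hw; exact: (th_limE (L := (1 + r)%N) (Ft_isL Ff)).
Qed.

Lemma Fder_th_lim_sub n : (0 < n)%N -> Fder n j (dlincomb (-1) (th n) th_lim).
Proof.
move=> n_gt0; split=> [|r f r_gt0 Ff].
  by apply: isDer_lincomb; [exact: (th_F1 n_gt0).1 | exact: isDer_th_lim].
pose M := maxn n (depth (n + r)).
have FM := th_telescope (M - n) n_gt0; rewrite subnKC ?leq_maxl // in FM.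
apply: (Ft_agree (G' := lincomb (-1) (th n f) (th M f))).
- exact: FM.2 r f r_gt0 Ff.
- have Lf := Ft_isL Ff.
  by apply: isL_lincomb; [exact: (th_F1 n_gt0).1.1 _ Lf | exact: isDer_th_lim.1 _ Lf].
- move=> w Hw; rewrite /dlincomb /lincomb (th_limE (m := M) (L := (n + r)%N) (Ft_isL Ff)) //.
  exact: leq_maxr.
Qed.

End Limit.

End Filtration.

End FreeLie.

Unset Implicit Arguments.

Theorem proposition2p2 (B : choiceType) (deg : B -> int) (d : T B -> T B)
  (q : nat) (Vf : nat -> vec B -> Prop)
  (* connected, V bounded above *)
  (Hconn : forall b, 0 <= deg b)
  (Hbdd : exists m : int, forall b, deg b <= m)
  (* (\hat L(V), d) is a minimal cdgl *)
  (Hd : is_cdgl_diff deg d) (Hmin : minimal deg d)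
  (* V = V^0 > V^1 > ... > V^q = 0, graded subspaces *)
  (Hq : (0 < q)%N)
  (HV0 : forall v, Vf 0%N v <-> isV v)
  (Hdec : forall a v, Vf a.+1 v -> Vf a v)
  (HVq : forall v, Vf q v -> v = @zeroV B)
  (Hsub0 : forall a, Vf a (@zeroV B))
  (Hsublin : forall a (c : rat) u v, Vf a u -> Vf a v -> Vf a (fun b => c * u b + v b))
  (Hgraded : forall a v (k : int), Vf a v -> Vf a (fun b => if deg b == k then v b else 0)) :
  (* each \mathcal F^n is a graded subspace of Der L *)
  (forall n j, Fder deg Vf q n j (fun _ => @zeroT B)) /\
  (forall n j (c : rat) th et, Fder deg Vf q n j th -> Fder deg Vf q n j et ->
      Fder deg Vf q n j (dlincomb c th et)) /\
  (* decreasing *)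
  (forall n j th, (0 < n)%N -> Fder deg Vf q n.+1 j th -> Fder deg Vf q n j th) /\
  (* [F^n, F^m] \subset F^{n+m} (hence F^1 is a sub Lie algebra, F^n ideals) *)
  (forall n m i j th et, (0 < n)%N -> (0 < m)%N ->
      Fder deg Vf q n i th -> Fder deg Vf q m j et ->
      Fder deg Vf q (n + m) (i + j) (dbr i j th et)) /\
  (* D = [d, -] preserves each F^n *)
  (forall n j th, (0 < n)%N -> Fder deg Vf q n j th ->
      Fder deg Vf q n (-1 + j) (dbr (-1) j d th)) /\
  (* completeness: F^1 -> lim F^1 / F^n is injective ... *)
  (forall j th, (forall n, (0 < n)%N -> Fder deg Vf q n j th) ->
      forall f, isL deg f -> th f = @zeroT B) /\
  (* ... and surjective *)
  (forall j (th : nat -> T B -> T B),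
      (forall n, (0 < n)%N -> Fder deg Vf q 1 j (th n)) ->
      (forall n, (0 < n)%N ->
         Fder deg Vf q n j (dlincomb (-1) (th n) (th n.+1))) ->
      exists Th, Fder deg Vf q 1 j Th /\
        forall n, (0 < n)%N -> Fder deg Vf q n j (dlincomb (-1) (th n) Th)).
Proof.
split; first exact: Fder0.
split; first by move=> n j c th et; exact: Fder_lincomb.
split; first by move=> n j th; exact: Fder_succ.
split; first by move=> n m i j th et _ _; exact: Fder_dbr.
split; first by move=> n j th _; exact: Fder_dbr_d.
split; first by move=> j th; exact: Fder_inj.
move=> j th th_F1 th_cauchy; exists (th_lim q th); split.
- exact: Fder1_th_lim.
- exact: Fder_th_lim_sub.
Qed.
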